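(* Let $(X,\le)$ be a poset, let $\alpha:X\to X$ be an order automorphism of $(X,\le)$ and $\beta:X\to X$ a self-inverse dual order automorphism of $(X,\le)$ with $\beta=\alpha\circ\beta\circ\alpha$. Set $1={\le}$ and $0=\alpha\circ({\le}^c)^\smile=({\le}^c)^\smile\circ\alpha$, and for $R\in\mathsf{Up}((X^2,\preceq))$ define $R'=\alpha\circ\beta\circ R^c\circ\beta$. Then $\mathbf{Dq}((X^2,\preceq))=\langle\mathsf{Up}((X^2,\preceq)),\cap,\cup,\circ,1,0,{\sim},-,'\rangle$ is a distributive quasi relation algebra.
   Context: For binary relations: converse $R^\smile=\{(x,y)\mid(y,x)\in R\}$; composition $R\circ S=\{(x,y)\mid\exists z\,((x,z)\in R,(z,y)\in S)\}$; complement $R^c=X^2\setminus R$. Functions are identified with their graphs. $X^2$ is partially ordered by $(u,v)\preceq(x,y)$ iff $x\le u$ and $v\le y$; $\mathsf{Up}((X^2,\preceq))$ is its set of up-sets. On it: $R\backslash S=(R^\smile\circ S^c)^c$, $R/S=(R^c\circ S^\smile)^c$, ${\sim}R=R\backslash0$, $-R=0/R$. Order automorphism: bijection with $x\le y\iff\alpha(x)\le\alpha(y)$; dual order automorphism: bijection with $x\le y\iff\beta(y)\le\beta(x)$; self-inverse: $\beta\circ\beta=\mathrm{id}_X$. A quasi relation algebra is an algebra $\langle A,\wedge,\vee,\cdot,1,0,{\sim},-,'\rangle$ where $\langle A,\wedge,\vee,\cdot,1\rangle$ with residuals $\backslash,/$ is a residuated lattice, $0\in A$, ${\sim}a=a\backslash0$,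 $-a=0/a$, ${\sim}{-}a={-}{\sim}a=a$, and $a''=a$, $(a\vee b)'=a'\wedge b'$, $({\sim}a)'=-(a')$, $(a\cdot b)'=a'+b'$ with $a+b={\sim}(-b\cdot-a)$; distributive means the lattice reduct is distributive. *)

Definition rel (X : Type) := X -> X -> Prop.

Section Rels.
Context {X : Type}.

Definition conv (R : rel X) : rel X := fun x y => R y x.
Definition comp (R S : rel X) : rel X := fun x y => exists z, R x z /\ S z y.
Definition compl (R : rel X) : rel X := fun x y => ~ R x y.
Definition cap (R S : rel X) : rel X := fun x y => R x y /\ S x y.
Definition cup (R S : rel X) : rel X := fun x y => R x y \/ S x y.
Definition graph (f : X -> X) : rel X := fun x y => y = f x.

(* residuals on Up((X^2, preceq)) *)
Definition ldiv (R S : rel X) : rel X := compl (comp (conv R) (compl S)).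
Definition rdiv (R S : rel X) : rel X := compl (comp (compl R) (conv S)).

Definition preceq (le : rel X) (p q : X * X) : Prop :=
  le (fst q) (fst p) /\ le (snd p) (snd q).

Definition is_upset (le : rel X) (R : rel X) : Prop :=
  forall u v x y, R u v -> preceq le (u, v) (x, y) -> R x y.
End Rels.

Definition is_poset {X : Type} (le : rel X) : Prop :=
  (forall x, le x x) /\
  (forall x y, le x y -> le y x -> x = y) /\
  (forall x y z, le x y -> le y z -> le x z).

Definition bijective_fun {X : Type} (f : X -> X) : Prop :=
  (forall x y, f x = f y -> x = y) /\ (forall y, exists x, f x = y).

Definition order_automorphism {X : Type} (le : rel X) (a : X -> X) : Prop :=
  bijective_fun a /\ (forall x y, le x y <-> le (a x) (a y)).

Definition dual_order_automorphism {X : Type} (le : rel X) (b : X -> X) : Prop :=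
  bijective_fun b /\ (forall x y, le x y <-> le (b y) (b x)).

Definition self_inverse {X : Type} (b : X -> X) : Prop := forall x, b (b x) = x.

(* A (distributive) quasi relation algebra, presented as an algebra whose
   carrier is the subset S of a type A, with the operations given on A. *)
Definition is_distributive_qra {A : Type} (S : A -> Prop)
  (meet join mult : A -> A -> A) (one zero : A)
  (lneg rneg prime : A -> A) : Prop :=
  let le a b := meet a b = a in
  (forall a b, S a -> S b -> S (meet a b)) /\
  (forall a b, S a -> S b -> S (join a b)) /\
  (forall a b, S a -> S b -> S (mult a b)) /\
  S one /\ S zero /\
  (forall a, S a -> S (lneg a)) /\
  (forall a, S a -> S (rneg a)) /\
  (forall a, S a -> S (prime a)) /\
  (forall a b, S a -> S b -> meet a b = meet b a) /\
  (forall a b, S a -> S b -> join a b = join b a) /\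
  (forall a b c, S a -> S b -> S c -> meet a (meet b c) = meet (meet a b) c) /\
  (forall a b c, S a -> S b -> S c -> join a (join b c) = join (join a b) c) /\
  (forall a b, S a -> S b -> meet a (join a b) = a) /\
  (forall a b, S a -> S b -> join a (meet a b) = a) /\
  (forall a b c, S a -> S b -> S c ->
     meet a (join b c) = join (meet a b) (meet a c)) /\
  (forall a b c, S a -> S b -> S c -> mult a (mult b c) = mult (mult a b) c) /\
  (forall a, S a -> mult one a = a) /\
  (forall a, S a -> mult a one = a) /\
  (exists ld rd : A -> A -> A,
     (forall a b, S a -> S b -> S (ld a b)) /\
     (forall a b, S a -> S b -> S (rd a b)) /\
     (forall a b c, S a -> S b -> S c ->
        (le (mult a b) c <-> le b (ld a c)) /\
        (le (mult a b) c <-> le a (rd c b))) /\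
     (forall a, S a -> lneg a = ld a zero) /\
     (forall a, S a -> rneg a = rd zero a)) /\
  (forall a, S a -> lneg (rneg a) = a) /\
  (forall a, S a -> rneg (lneg a) = a) /\
  (forall a, S a -> prime (prime a) = a) /\
  (forall a b, S a -> S b -> prime (join a b) = meet (prime a) (prime b)) /\
  (forall a, S a -> prime (lneg a) = rneg (prime a)) /\
  (forall a b, S a -> S b ->
     prime (mult a b) = lneg (mult (rneg (prime b)) (rneg (prime a)))).

(* On up-sets every operation of Dq is computed pointwise: 0 (x, y) iff
   ~ y <= alpha x, and the up-set conditions give
     -R (x, y)         iff  ~ R (y, alpha x),
     ~R (x, alpha y)   iff  ~ R (y, x),
     R' (x, y)         iff  ~ R (beta (alpha x), beta y).
   The lattice, associativity and residuation laws hold for arbitrary binary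
   relations, and <= is a two-sided unit on up-sets; the quasi relation algebra identities reduce to double negation,
   using beta o beta = id and beta = alpha o beta o alpha, which together give
   beta o alpha o beta o alpha = id. *)

From Stdlib Require Import Classical FunctionalExtensionality PropExtensionality
  Relation_Definitions.

Lemma NNPP_iff (P : Prop) : ~ ~ P <-> P.
Proof. split; [apply NNPP | tauto]. Qed.

Section RelationAlgebra.
Context {X : Type}.

Lemma rel_ext (R S : rel X) : (forall x y, R x y <-> S x y) -> R = S.
Proof.
  intros H; extensionality x; extensionality y.
  apply propositional_extensionality, H.
Qed.

Lemma rel_ext_surj (f : X -> X) (R S : rel X) :
  (forall y, exists x, f x = y) ->
  (forall x y, R x (f y) <-> S x (f y)) -> R = S.
Proof.
  intros f_surj H; apply rel_ext; intros x y.
  destruct (f_surj y) as [y' <-]; apply H.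
Qed.

Lemma cap_eq_l (R S : rel X) : cap R S = R <-> inclusion X R S.
Proof.
  split.
  - intros H x y HR; rewrite <- H in HR; apply HR.
  - intros H; apply rel_ext; intros x y; unfold cap; split; [tauto |].
    intros HR; split; auto.
Qed.

Lemma cap_comm (R S : rel X) : cap R S = cap S R.
Proof. apply rel_ext; unfold cap; tauto. Qed.

Lemma cup_comm (R S : rel X) : cup R S = cup S R.
Proof. apply rel_ext; unfold cup; tauto. Qed.

Lemma cap_assoc (R S T : rel X) : cap R (cap S T) = cap (cap R S) T.
Proof. apply rel_ext; unfold cap; tauto. Qed.

Lemma cup_assoc (R S T : rel X) : cup R (cup S T) = cup (cup R S) T.
Proof. apply rel_ext; unfold cup; tauto. Qed.

Lemma cap_cup_absorb (R S : rel X) : cap R (cup R S) = R.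
Proof. apply rel_ext; unfold cap, cup; tauto. Qed.

Lemma cup_cap_absorb (R S : rel X) : cup R (cap R S) = R.
Proof. apply rel_ext; unfold cap, cup; tauto. Qed.

Lemma cap_cup_distr (R S T : rel X) : cap R (cup S T) = cup (cap R S) (cap R T).
Proof. apply rel_ext; unfold cap, cup; tauto. Qed.

Lemma comp_assoc (R S T : rel X) : comp R (comp S T) = comp (comp R S) T.
Proof. apply rel_ext; unfold comp; firstorder. Qed.

Lemma comp_graph (f g : X -> X) :
  comp (graph f) (graph g) = graph (fun x => g (f x)).
Proof.
  apply rel_ext; intros x y; unfold comp, graph; split.
  - intros [z [-> ->]]; reflexivity.
  - intros ->; exists (f x); auto.
Qed.

Lemma graph_inj (f g : X -> X) : graph f = graph g -> forall x, f x = g x.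
Proof.
  intros H x.
  change (graph g x (f x)); rewrite <- H; reflexivity.
Qed.

Lemma comp_incl_ldiv (R S T : rel X) :
  inclusion X (comp R S) T <-> inclusion X S (ldiv R T).
Proof.
  unfold inclusion, ldiv, comp, conv, compl; split.
  - intros H x y HS [z [HR HT]]; apply HT, H; exists x; auto.
  - intros H x y [z [HR HS]]; apply NNPP; intros HT.
    apply (H z y HS); exists x; auto.
Qed.

Lemma comp_incl_rdiv (R S T : rel X) :
  inclusion X (comp R S) T <-> inclusion X R (rdiv T S).
Proof.
  unfold inclusion, rdiv, comp, conv, compl; split.
  - intros H x y HR [z [HT HS]]; apply HT, H; exists y; auto.
  - intros H x y [z [HR HS]]; apply NNPP; intros HT.
    apply (H x z HR); exists y; auto.
Qed.

End RelationAlgebra.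

Section UpSets.
Context {X : Type} (le : rel X).
Hypothesis le_refl : forall x, le x x.

Lemma upset_cap (R S : rel X) :
  is_upset le R -> is_upset le S -> is_upset le (cap R S).
Proof. intros HR HS u v x y [Ru Su] Hp; split; eauto. Qed.

Lemma upset_cup (R S : rel X) :
  is_upset le R -> is_upset le S -> is_upset le (cup R S).
Proof. intros HR HS u v x y [Ru | Su] Hp; [left | right]; eauto. Qed.

Lemma upset_comp (R S : rel X) :
  is_upset le R -> is_upset le S -> is_upset le (comp R S).
Proof.
  intros HR HS u v x y [z [Ruz Szv]] [Hxu Hvy]; exists z; split.
  - exact (HR u z x z Ruz (conj Hxu (le_refl z))).
  - exact (HS z v z y Szv (conj (le_refl z) Hvy)).
Qed.

Lemma upset_ldiv (R S : rel X) :
  is_upset le R -> is_upset le S -> is_upset le (ldiv R S).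
Proof.
  intros HR HS u v x y H [Hxu Hvy] [z [Rzx nSzy]]; apply H; exists z; split.
  - exact (HR z x z u Rzx (conj (le_refl z) Hxu)).
  - intros Szv; apply nSzy, (HS z v z y Szv (conj (le_refl z) Hvy)).
Qed.

Lemma upset_rdiv (R S : rel X) :
  is_upset le R -> is_upset le S -> is_upset le (rdiv R S).
Proof.
  intros HR HS u v x y H [Hxu Hvy] [z [nRxz Syz]]; apply H; exists z; split.
  - intros Ruz; apply nRxz, (HR u z x z Ruz (conj Hxu (le_refl z))).
  - exact (HS y z v z Syz (conj Hvy (le_refl z))).
Qed.

Lemma upset_le : (forall x y z, le x y -> le y z -> le x z) -> is_upset le le.
Proof. intros le_trans u v x y Huv [Hxu Hvy]; eauto. Qed.

Lemma comp_le_l (R : rel X) : is_upset le R -> comp le R = R.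
Proof.
  intros HR; apply rel_ext; intros x y; split.
  - intros [z [Hxz Rzy]]; exact (HR z y x y Rzy (conj Hxz (le_refl y))).
  - intros Rxy; exists x; auto.
Qed.

Lemma comp_le_r (R : rel X) : is_upset le R -> comp R le = R.
Proof.
  intros HR; apply rel_ext; intros x y; split.
  - intros [z [Rxz Hzy]]; exact (HR x z x y Rxz (conj (le_refl x) Hzy)).
  - intros Rxy; exists y; auto.
Qed.

End UpSets.

Section Dq.
Context {X : Type} (le : rel X) (alpha beta : X -> X).

Definition dq_zero : rel X := comp (graph alpha) (conv (compl le)).
Definition dq_lneg (R : rel X) : rel X := ldiv R dq_zero.
Definition dq_rneg (R : rel X) : rel X := rdiv dq_zero R.
Definition dq_prime (R : rel X) : rel X :=
  comp (comp (comp (graph alpha) (graph beta)) (compl R)) (graph beta).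

Hypothesis le_refl : forall x, le x x.
Hypothesis le_trans : forall x y z, le x y -> le y z -> le x z.
Hypothesis alpha_mono : forall x y, le x y <-> le (alpha x) (alpha y).
Hypothesis beta_anti : forall x y, le x y <-> le (beta y) (beta x).
Hypothesis alpha_surj : forall y, exists x, alpha x = y.
Hypothesis beta_invol : self_inverse beta.
Hypothesis beta_alpha : forall x, beta x = alpha (beta (alpha x)).

Lemma dq_zero_iff x y : dq_zero x y <-> ~ le y (alpha x).
Proof.
  unfold dq_zero, comp, graph, conv, compl; split.
  - intros [z [-> H]]; exact H.
  - intros H; exists (alpha x); auto.
Qed.

Lemma dq_prime_iff (R : rel X) x y :
  dq_prime R x y <-> ~ R (beta (alpha x)) (beta y).
Proof.
  unfold dq_prime, comp, graph, compl; split.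
  - intros [w [[z [[u [-> ->]] nR]] ->]]; rewrite beta_invol; exact nR.
  - intros nR; exists (beta y); split; [| rewrite beta_invol; reflexivity].
    exists (beta (alpha x)); split; [exists (alpha x) |]; auto.
Qed.

Lemma dq_rneg_iff (R : rel X) :
  is_upset le R -> forall x y, dq_rneg R x y <-> ~ R y (alpha x).
Proof.
  intros HR x y; unfold dq_rneg, rdiv, compl at 1, comp at 1, conv.
  split.
  - intros H Ryax; apply H; exists (alpha x); split; [| exact Ryax].
    unfold compl; rewrite dq_zero_iff; auto.
  - intros nR [z [nZ Ryz]]; unfold compl in nZ; rewrite dq_zero_iff, NNPP_iff in nZ.
    exact (nR (HR y z y (alpha x) Ryz (conj (le_refl y) nZ))).
Qed.

Lemma dq_lneg_iff (R : rel X) :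
  is_upset le R -> forall x y, dq_lneg R x (alpha y) <-> ~ R y x.
Proof.
  intros HR x y; unfold dq_lneg, ldiv, compl at 1, comp at 1, conv.
  split.
  - intros H Ryx; apply H; exists y; split; [exact Ryx |].
    unfold compl; rewrite dq_zero_iff; auto.
  - intros nR [z [Rzx nZ]]; unfold compl in nZ; rewrite dq_zero_iff, NNPP_iff in nZ.
    apply (proj2 (alpha_mono _ _)) in nZ.
    exact (nR (HR z x y x Rzx (conj nZ (le_refl x)))).
Qed.

Lemma upset_dq_zero : is_upset le dq_zero.
Proof.
  intros u v x y H [Hxu Hvy]; rewrite dq_zero_iff in *.
  intros Hyax; apply H, (le_trans _ y); [exact Hvy |].
  apply (le_trans _ (alpha x)); [exact Hyax | apply (proj1 (alpha_mono _ _)), Hxu].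
Qed.

Lemma upset_dq_prime (R : rel X) : is_upset le R -> is_upset le (dq_prime R).
Proof.
  intros HR u v x y H [Hxu Hvy]; rewrite dq_prime_iff in *.
  intros Rxy; apply H, (HR _ _ _ _ Rxy); split.
  - apply (proj1 (beta_anti _ _)), (proj1 (alpha_mono _ _)), Hxu.
  - apply (proj1 (beta_anti _ _)), Hvy.
Qed.

Lemma upset_dq_lneg (R : rel X) : is_upset le R -> is_upset le (dq_lneg R).
Proof. intros HR; apply upset_ldiv, upset_dq_zero; auto. Qed.

Lemma upset_dq_rneg (R : rel X) : is_upset le R -> is_upset le (dq_rneg R).
Proof. intros HR; apply upset_rdiv; [| apply upset_dq_zero |]; auto. Qed.

Lemma beta_alpha_surj z : exists w, beta (alpha w) = z.
Proof.
  destruct (alpha_surj (beta z)) as [w Hw].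
  exists w; rewrite Hw; apply beta_invol.
Qed.

Lemma dq_lneg_rneg (R : rel X) : is_upset le R -> dq_lneg (dq_rneg R) = R.
Proof.
  intros HR; apply (rel_ext_surj alpha); [exact alpha_surj |]; intros x y.
  rewrite (dq_lneg_iff _ (upset_dq_rneg R HR)), (dq_rneg_iff R HR).
  apply NNPP_iff.
Qed.

Lemma dq_rneg_lneg (R : rel X) : is_upset le R -> dq_rneg (dq_lneg R) = R.
Proof.
  intros HR; apply rel_ext; intros x y.
  rewrite (dq_rneg_iff _ (upset_dq_lneg R HR)), (dq_lneg_iff R HR).
  apply NNPP_iff.
Qed.

Lemma dq_prime_involutive (R : rel X) : dq_prime (dq_prime R) = R.
Proof.
  apply rel_ext; intros x y.
  rewrite !dq_prime_iff, <- beta_alpha, !beta_invol.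
  apply NNPP_iff.
Qed.

Lemma dq_prime_cup (R S : rel X) :
  dq_prime (cup R S) = cap (dq_prime R) (dq_prime S).
Proof.
  apply rel_ext; intros x y; unfold cap, cup; rewrite !dq_prime_iff; tauto.
Qed.

Lemma dq_prime_lneg (R : rel X) :
  is_upset le R -> dq_prime (dq_lneg R) = dq_rneg (dq_prime R).
Proof.
  intros HR; apply rel_ext; intros x y.
  rewrite dq_prime_iff, (beta_alpha y), (dq_lneg_iff R HR).
  rewrite (dq_rneg_iff _ (upset_dq_prime R HR)), dq_prime_iff.
  reflexivity.
Qed.

Lemma dq_prime_comp (R S : rel X) :
  is_upset le R -> is_upset le S ->
  dq_prime (comp R S) = dq_lneg (comp (dq_rneg (dq_prime S)) (dq_rneg (dq_prime R))).
Proof.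
  intros HR HS.
  assert (rneg_prime_iff : forall T, is_upset le T ->
            forall x y, dq_rneg (dq_prime T) x y <-> T (beta (alpha y)) (beta (alpha x))).
  { intros T HT x y.
    rewrite (dq_rneg_iff _ (upset_dq_prime T HT)), dq_prime_iff; apply NNPP_iff. }
  apply (rel_ext_surj alpha); [exact alpha_surj |]; intros x y.
  rewrite dq_prime_iff, dq_lneg_iff
    by (apply upset_comp; [| apply upset_dq_rneg, upset_dq_prime ..]; auto).
  apply not_iff_compat; split.
  - intros [z [Rxz Szy]]; destruct (beta_alpha_surj z) as [w <-].
    exists w; rewrite !rneg_prime_iff by assumption; auto.
  - intros [w [Syw Rwx]]; rewrite rneg_prime_iff in Syw, Rwx by assumption.
    exists (beta (alpha w)); auto.
Qed.

Lemma dq_is_distributive_qra :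
  is_distributive_qra (is_upset le) cap cup comp le
    dq_zero dq_lneg dq_rneg dq_prime.
Proof.
  unfold is_distributive_qra; cbv zeta.
  repeat match goal with |- _ /\ _ => split end.
  - exact (upset_cap le).
  - exact (upset_cup le).
  - exact (upset_comp le le_refl).
  - exact (upset_le le le_trans).
  - exact upset_dq_zero.
  - exact upset_dq_lneg.
  - exact upset_dq_rneg.
  - exact upset_dq_prime.
  - intros; apply cap_comm.
  - intros; apply cup_comm.
  - intros; apply cap_assoc.
  - intros; apply cup_assoc.
  - intros; apply cap_cup_absorb.
  - intros; apply cup_cap_absorb.
  - intros; apply cap_cup_distr.
  - intros; apply comp_assoc.
  - exact (comp_le_l le le_refl).
  - exact (comp_le_r le le_refl).
  - exists ldiv, rdiv.
    split; [exact (upset_ldiv le le_refl) |].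
    split; [exact (upset_rdiv le le_refl) |].
    split; [| split; reflexivity].
    intros R S T _ _ _; rewrite !cap_eq_l.
    split; [apply comp_incl_ldiv | apply comp_incl_rdiv].
  - exact dq_lneg_rneg.
  - exact dq_rneg_lneg.
  - intros; apply dq_prime_involutive.
  - intros; apply dq_prime_cup.
  - exact dq_prime_lneg.
  - exact dq_prime_comp.
Qed.

End Dq.

Theorem corollary3p16 (X : Type) (le : rel X) (alpha beta : X -> X) :
  is_poset le ->
  order_automorphism le alpha ->
  dual_order_automorphism le beta ->
  self_inverse beta ->
  graph beta = comp (comp (graph alpha) (graph beta)) (graph alpha) ->
  is_distributive_qra (is_upset le)
    cap cup comp
    le
    (comp (graph alpha) (conv (compl le)))
    (fun R => ldiv R (comp (graph alpha) (conv (compl le))))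
    (fun R => rdiv (comp (graph alpha) (conv (compl le))) R)
    (fun R => comp (comp (comp (graph alpha) (graph beta)) (compl R)) (graph beta)).
Proof.
  intros [le_refl [_ le_trans]] [[_ alpha_surj] alpha_mono] [_ beta_anti]
    beta_invol beta_graph.
  rewrite !comp_graph in beta_graph.
  exact (dq_is_distributive_qra le alpha beta le_refl le_trans alpha_mono
           beta_anti alpha_surj beta_invol (graph_inj _ _ beta_graph)).
Qed.
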